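(* Let $\mathbb{F}\subseteq\mathbb{C}$ be a subfield closed under complex conjugation, let $m\ge 1$, $N\ge1$, and let $\mathbf{A}(z)=\sum_{k=0}^N A_kz^k$ with $A_k\in\mathbb{F}^{m\times m}$ and $A_N\neq 0$ satisfy $\mathbf{A}(z)\widetilde{\mathbf{A}}(z)=I_m$ for all $z\in\mathbb{C}\setminus\{0\}$, where $\widetilde{\mathbf{A}}(z)=\sum_{k=0}^N A_k^*z^{-k}$. Then $\det\mathbf{A}(z)=c\,z^d$ for some constant $c\ne0$ and integer $d\ge0$, and: (a) $d\ge N$; (b) $d=N$ if and only if $\operatorname{rank}(A_0)=m-1$.
   Context: $A^*$ denotes the conjugate transpose of a matrix $A$. *)

(* The complex field C is modelled as R[i] = complex R for an
   arbitrary realType R (every realType is isomorphic to the reals). *)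
From HB Require Import structures.
From mathcomp Require Import all_boot all_order all_algebra.
From mathcomp Require Import reals complex.
Set Implicit Arguments. Unset Strict Implicit. Unset Printing Implicit Defensive.
Import Order.TTheory GRing.Theory Num.Theory.
Local Open Scope ring_scope.

Definition ctrmx (C : numClosedFieldType) (m n : nat) (A : 'M[C]_(m, n)) : 'M[C]_(n, m) :=
  (map_mx Num.conj A)^T.

Definition mxpoly_eval (C : numClosedFieldType) (m N : nat) (A : nat -> 'M[C]_m) (z : C) : 'M[C]_m :=
  \sum_(k < N.+1) (z ^+ k) *: A k.

Definition mxpoly_tilde (C : numClosedFieldType) (m N : nat) (A : nat -> 'M[C]_m) (z : C) : 'M[C]_m :=
  \sum_(k < N.+1) (z ^- k) *: ctrmx (A k).

From HB Require Import structures.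
From mathcomp Require Import all_boot all_order all_algebra.
From mathcomp Require Import reals complex.
Import Order.TTheory GRing.Theory Num.Theory.
Local Open Scope ring_scope.
Local Open Scope complex_scope.
Set Implicit Arguments. Unset Strict Implicit.

(* Clearing denominators, P(X) = sum X^k A_k and Q(X) = X^N Ã(X) are matrix
   polynomials with P Q = X^N I, since this holds at every z <> 0.  Hence
   det P divides X^(Nm), so det P = c X^d, and (det P) Q = X^N adj P.  Reading
   this identity at X^d, where Q contributes Q(0) = A_N^* <> 0, forces d >= N;
   reading it at X^N gives adj A_0 = c A_N^* if d = N and adj A_0 = 0 if d > N.
   As det A_0 = 0, adj A_0 <> 0 exactly when rank A_0 = m - 1. *)

Lemma exists_row'_mxrank (F : fieldType) p q (K : 'M[F]_(p.+1, q)) :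
  (\rank K <= p)%N -> exists i, \rank (row' i K) = \rank K.
Proof.
(* A maximal-rank selection of rows misses some row i, which can be deleted. *)
move=> rankK; pose f := maxrankfun K.
have : ~~ ('I_p.+1 \subset codom f).
  apply/negP => /subset_leq_card; rewrite card_ord => h.
  by have := leq_trans h (card_size _); rewrite size_codom card_ord ltnNge rankK.
case/subsetPn => i _ f'i; exists i.
apply/eqP; rewrite eqn_leq mxrankS ?row'Esub ?rowsub_sub //=.
rewrite -(eq_maxrowsub K).1 mxrankS //; apply/row_subP => k; rewrite row_rowsub.
have i_neq_fk : i != f k by apply: contraNneq f'i => ->; apply: codom_f.
have [l -> _] := unlift_some i_neq_fk.
have -> : row (lift i l) K = row l (rowsub (lift i) K) by apply/rowP => b; rewrite !mxE.
exact: row_sub.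
Qed.

Lemma adj_neq0_rank (F : fieldType) n (M : 'M[F]_n.+1) :
  \rank M = n -> \adj M != 0.
Proof.
move=> rankM; have [i rank_i] := exists_row'_mxrank (eq_leq rankM).
have rank_iT : (\rank (row' i M)^T <= n)%N by rewrite mxrank_tr rank_i rankM.
have [j rank_j] := exists_row'_mxrank rank_iT.
have minor_unit : col' j (row' i M) \in unitmx.
  by rewrite -row_free_unit /row_free -mxrank_tr tr_col' rank_j mxrank_tr rank_i rankM.
apply/eqP => /matrixP /(_ j i); rewrite !mxE /cofactor => /eqP.
rewrite mulf_eq0 signr_eq0 /=.
have -> : row' i (col' j M) = col' j (row' i M) by apply/matrixP => a b; rewrite !mxE.
by move: minor_unit; rewrite unitmxE unitfE => /negPf ->.
Qed.

Lemma adj_eq0_rank (F : fieldType) n (M : 'M[F]_n.+1) :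
  (\rank M < n)%N -> \adj M = 0.
Proof.
move=> rankM; apply/matrixP => a b; rewrite !mxE /cofactor.
suff -> : \det (row' b (col' a M)) = 0 by rewrite mulr0.
apply/eqP; rewrite -[_ == 0]negbK -unitfE -unitmxE -row_free_unit /row_free.
rewrite neq_ltn; apply/orP; left; apply: leq_ltn_trans rankM.
rewrite row'Esub (leq_trans (mxrankS (rowsub_sub _ _))) //.
by rewrite -mxrank_tr tr_col' -[leqRHS]mxrank_tr mxrankS // row'Esub rowsub_sub.
Qed.

Lemma adj_neq0_singular (F : fieldType) m (M : 'M[F]_m) :
  (0 < m)%N -> \det M = 0 -> (\adj M != 0 <-> \rank M = (m - 1)%N).
Proof.
case: m M => // n M _ detM; rewrite subn1 /=.
have rankM : (\rank M <= n)%N.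
  rewrite -ltnS ltn_neqAle rank_leq_row andbT; apply/eqP => /eqP.
  by rewrite -/(row_free M) row_free_unit unitmxE unitfE detM eqxx.
split=> [adjM|]; last exact: adj_neq0_rank.
apply/eqP; rewrite eqn_leq rankM leqNgt; apply/negP => /adj_eq0_rank adj0.
by rewrite adj0 eqxx in adjM.
Qed.

Lemma det_scale_eq_adj (R : comNzRingType) n (M M' : 'M[R]_n) a :
  M *m M' = a%:M -> \det M *: M' = a *: \adj M.
Proof.
move=> MM'; have := congr1 (mulmx (\adj M)) MM'.
by rewrite mulmxA mul_adj_mx mul_scalar_mx mul_mx_scalar.
Qed.

Lemma ctrmx_eq0 (C : numClosedFieldType) m n (M : 'M[C]_(m, n)) :
  (ctrmx M == 0) = (M == 0).
Proof.
apply/eqP/eqP => [/matrixP ctrM0 | ->]; last first.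
  by apply/matrixP => a b; rewrite !mxE conjC0.
by apply/matrixP => a b; have /eqP := ctrM0 b a; rewrite !mxE conjC_eq0 => /eqP.
Qed.

Lemma dvdp_Xn_monomial (F : fieldType) (p : {poly F}) n :
  p %| 'X^n -> p = lead_coef p *: 'X^((size p).-1).
Proof.
rewrite -[X in X^+ _]subr0 -polyC0 => /dvdp_exp_XsubCP[k _].
rewrite polyC0 subr0 => /eqpP[[a b] /= /andP[a0 b0] eab].
have pE : p = (b / a) *: 'X^k by rewrite mulrC -scalerA -eab scalerA mulVf ?scale1r.
rewrite {2 3}pE lead_coefZ lead_coefXn mulr1.
by rewrite size_scale ?mulf_neq0 ?invr_eq0 // size_polyXn.
Qed.

Lemma coef0_mulXn_eq (R : nzRingType) d n (q r : {poly R}) :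
  'X^d * q = 'X^n * r -> r`_0 = if (n < d)%N then 0 else q`_(n - d).
Proof. by move/(congr1 (coefp n)); rewrite /= !coefXnM ltnn subnn => ->. Qed.

Lemma coef0_mulXn_eq0 (R : nzRingType) d n (q r : {poly R}) :
  (d < n)%N -> 'X^d * q = 'X^n * r -> q`_0 = 0.
Proof. by move=> ltdn /(congr1 (coefp d)); rewrite /= !coefXnM ltnn subnn ltdn. Qed.

Lemma poly_eq0_nonzero (R : numDomainType) (p : {poly R}) :
  (forall z, z != 0 -> p.[z] = 0) -> p = 0.
Proof.
move=> p_root; apply/eqP; apply: contraT => p0.
have := max_poly_roots p0 (rs := [seq i.+1%:R | i <- iota 0 (size p)]).
rewrite size_map size_iota ltnn; apply.
  by apply/allP => x /mapP[i _ ->]; apply/rootP/p_root; rewrite pnatr_eq0.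
by rewrite map_inj_uniq ?iota_uniq // => i j /eqP; rewrite eqr_nat eqSS => /eqP.
Qed.

Lemma mxpoly_eq_nonzero (R : numDomainType) m n (M M' : 'M[{poly R}]_(m, n)) :
  (forall z, z != 0 -> map_mx (horner_eval z) M = map_mx (horner_eval z) M') ->
  M = M'.
Proof.
move=> MM'; apply/matrixP => a b; apply/eqP; rewrite -subr_eq0; apply/eqP.
apply: poly_eq0_nonzero => z z0; have /matrixP/(_ a b) := MM' z z0.
by rewrite !mxE !horner_evalE hornerD hornerN => ->; rewrite subrr.
Qed.

Lemma map_mx_horner_sum (R : comNzRingType) m n (B : nat -> 'M[R]_m) e z :
  map_mx (horner_eval z) (\sum_(k < n) 'X^(e k) *: map_mx polyC (B k))
  = \sum_(k < n) z ^+ e k *: B k.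
Proof.
apply/matrixP => a b; rewrite !mxE !summxE rmorph_sum; apply: eq_bigr => k _.
by rewrite !mxE /= /horner_eval hornerM hornerXn hornerC.
Qed.

Definition mxpoly_of (R : nzRingType) m N (A : nat -> 'M[R]_m) : 'M[{poly R}]_m :=
  \sum_(k < N.+1) 'X^k *: map_mx polyC (A k).

(* X^N Ã(X), a genuine polynomial in X *)
Definition mxpoly_paraconj (C : numClosedFieldType) m N (A : nat -> 'M[C]_m) :
    'M[{poly C}]_m :=
  \sum_(k < N.+1) 'X^(N - k) *: map_mx polyC (ctrmx (A k)).

Section ParaunitaryMxpoly.

Variables (C : numClosedFieldType) (m N : nat) (A : nat -> 'M[C]_m).

Local Notation P := (mxpoly_of N A).
Local Notation Q := (mxpoly_paraconj N A).

Lemma horner_mxpoly_of z : map_mx (horner_eval z) P = mxpoly_eval N A z.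
Proof. exact: map_mx_horner_sum. Qed.

Lemma horner_mxpoly_paraconj z :
  z != 0 -> map_mx (horner_eval z) Q = z ^+ N *: mxpoly_tilde N A z.
Proof.
move=> z0; rewrite (map_mx_horner_sum (fun k => ctrmx (A k)) (subn N)) /mxpoly_tilde scaler_sumr.
apply: eq_bigr => k _; rewrite scalerA; congr (_ *: _).
by rewrite -[in z ^+ N](subnK (ltnSE (ltn_ord k))) exprD mulfK ?expf_neq0.
Qed.

Lemma mxpoly_eval0 : mxpoly_eval N A 0 = A 0%N.
Proof.
rewrite /mxpoly_eval big_ord_recl expr0 scale1r big1 ?addr0 // => k _.
by rewrite expr0n scale0r.
Qed.

Lemma coef0_mxpoly_paraconj a b : (Q a b)`_0 = ctrmx (A N) a b.
Proof.
have /matrixP/(_ a b) := map_mx_horner_sum (n := N.+1) (fun k => ctrmx (A k)) (subn N) 0.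
rewrite mxE horner_evalE horner_coef0 => ->.
rewrite summxE big_ord_recr /= subnn expr0 big1 ?add0r ?mxE ?mul1r // => k _.
by rewrite mxE expr0n subn_eq0 leqNgt ltn_ord mul0r.
Qed.

Lemma coef0_adj_mxpoly_of a b : (\adj P a b)`_0 = \adj (A 0%N) a b.
Proof.
by rewrite -horner_coef0 -mxpoly_eval0 -horner_mxpoly_of -map_mx_adj [RHS]mxE.
Qed.

Hypothesis paraunitary : forall z, z != 0 ->
  mxpoly_eval N A z *m mxpoly_tilde N A z = 1%:M.

Lemma mxpoly_of_mul_paraconj : P *m Q = 'X^N%:M.
Proof.
apply: mxpoly_eq_nonzero => z z0.
rewrite map_mxM horner_mxpoly_of horner_mxpoly_paraconj // -scalemxAr paraunitary //.
by rewrite map_scalar_mx /= horner_evalE hornerXn scalemx1.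
Qed.

Local Notation c := (lead_coef (\det P)).
Local Notation d := ((size (\det P)).-1).

Lemma det_mxpoly_of_dvdXn : \det P %| 'X^(N * m).
Proof.
apply/dvdpP; exists (\det Q).
by rewrite mulrC -det_mulmx mxpoly_of_mul_paraconj det_scalar exprM.
Qed.

Lemma det_mxpoly_ofE : \det P = c *: 'X^d.
Proof. exact: dvdp_Xn_monomial det_mxpoly_of_dvdXn. Qed.

Lemma lead_det_mxpoly_of_neq0 : c != 0.
Proof.
rewrite lead_coef_eq0; apply: contraTneq det_mxpoly_of_dvdXn => ->.
by rewrite dvd0p expf_neq0 ?polyX_eq0.
Qed.

Lemma det_mxpoly_eval z : \det (mxpoly_eval N A z) = c * z ^+ d.
Proof.
rewrite -horner_mxpoly_of det_map_mx [in LHS]det_mxpoly_ofE /=.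
by rewrite horner_evalE hornerZ hornerXn.
Qed.

Lemma adj_mxpoly_ofE a b : 'X^d * (c *: Q a b) = 'X^N * \adj P a b.
Proof.
rewrite -mul_polyC mulrA [_ * c%:P]mulrC mul_polyC -det_mxpoly_ofE.
by have /matrixP/(_ a b) := det_scale_eq_adj mxpoly_of_mul_paraconj; rewrite !mxE.
Qed.

Hypothesis A_N_neq0 : A N != 0.

Lemma leq_det_order : (N <= d)%N.
Proof.
rewrite leqNgt; apply/negP => ltdN; move: A_N_neq0; rewrite -ctrmx_eq0.
apply/negP/negPn/eqP/matrixP => a b.
have := coef0_mulXn_eq0 ltdN (adj_mxpoly_ofE a b).
rewrite coefZ coef0_mxpoly_paraconj mxE => /eqP.
by rewrite !mxE mulf_eq0 (negPf lead_det_mxpoly_of_neq0) => /eqP.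
Qed.

Lemma adj_coef0 : \adj (A 0%N) = if (N < d)%N then 0 else c *: ctrmx (A N).
Proof.
apply/matrixP => a b; rewrite -coef0_adj_mxpoly_of (coef0_mulXn_eq (adj_mxpoly_ofE a b)).
case: ltnP => _; first by rewrite mxE.
have /eqP -> : (N - d == 0)%N by rewrite subn_eq0 leq_det_order.
by rewrite coefZ coef0_mxpoly_paraconj !mxE.
Qed.

Lemma det_coef0_eq0 : (0 < N)%N -> \det (A 0%N) = 0.
Proof.
move=> N_gt0; have d_neq0 : d != 0%N by rewrite -lt0n (leq_trans N_gt0 leq_det_order).
by rewrite -mxpoly_eval0 det_mxpoly_eval expr0n (negPf d_neq0) mulr0.
Qed.

End ParaunitaryMxpoly.

Unset Implicit Arguments.
Theorem lemma1 (R : realType) (F : {pred R[i]})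
  (F_subfield : divring_closed F)
  (F_conj : forall x : R[i], x \in F -> x^* \in F)
  (m N : nat) (m_ge1 : (1 <= m)%N) (N_ge1 : (1 <= N)%N)
  (A : nat -> 'M[R[i]]_m)
  (A_F : forall k i j, A k i j \in F)
  (A_N : A N != 0)
  (para : forall z : R[i], z != 0 ->
     mxpoly_eval N A z *m mxpoly_tilde N A z = 1%:M) :
  exists (c : R[i]) (d : nat),
    [/\ c != 0,
        (forall z : R[i], \det (mxpoly_eval N A z) = c * z ^+ d),
        (N <= d)%N
      & (d = N <-> \rank (A 0%N) = (m - 1)%N)].
Proof.
have c_neq0 := lead_det_mxpoly_of_neq0 para.
have leNd := leq_det_order para A_N.
exists (lead_coef (\det (mxpoly_of N A))), (size (\det (mxpoly_of N A))).-1.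
split=> //; first exact: det_mxpoly_eval.
have detA0 := det_coef0_eq0 para A_N N_ge1.
rewrite -(adj_neq0_singular m_ge1 detA0) (adj_coef0 para A_N).
case: ltnP => [ltNd | leDN]; first by rewrite eqxx; split=> // eqdN; rewrite eqdN ltnn in ltNd.
rewrite scaler_eq0 negb_or c_neq0 ctrmx_eq0 A_N.
by split=> // _; apply/eqP; rewrite eqn_leq leDN.
Qed.
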